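(* Let $G=(V,E)$ be a simple graph on $n$ vertices and let $\bar G$ be its complement. Then $\varepsilon(G)$ is at most the number of acyclic orientations of the edges of $\bar G$. Equality holds if and only if $G$ is a complete $p$-partite graph for some $p\in[n]$.
   Context: For an undirected simple graph $G=(V,E)$, $\varepsilon(G)$ denotes the maximum, over all acyclic orientations of $E$, of the number of linear extensions of the partial order induced on $V$ (where $u<v$ iff there is a directed path from $u$ to $v$; a linear extension of a poset on an $n$-element set is an order-preserving bijection onto $[n]$). A complete $p$-partite graph is one whose vertex set is partitioned into $p$ nonempty parts, with two vertices adjacent iff they lie in different parts. *)

From mathcomp Require Import all_boot.
Set Implicit Arguments. Unset Strict Implicit. Unset Printing Implicit Defensive.

Section Graphs.
Variable V : finType.

Definition simple_graph (E : rel V) : Prop :=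
  symmetric E /\ irreflexive E.

Definition compl_graph (E : rel V) : rel V :=
  fun u v => (u != v) && ~~ E u v.

Definition is_orientation (E : rel V) (A : {set V * V}) : bool :=
  [forall u, forall v, ((u, v) \in A) ==> E u v] &&
  [forall u, forall v, E u v ==> (((u, v) \in A) (+) ((v, u) \in A))].

Definition arcs (A : {set V * V}) : rel V := fun x y => (x, y) \in A.

Definition acyclic (A : {set V * V}) : bool :=
  [forall u, forall v, ((u, v) \in A) ==> ~~ connect (arcs A) v u].

Definition acyclic_orientations (E : rel V) : {set {set V * V}} :=
  [set A | is_orientation E A && acyclic A].

Definition induced_lt (A : {set V * V}) : rel V :=
  fun u v => [exists w, arcs A u w && connect (arcs A) w v].

(* Linear extensions: order-preserving bijections V -> [n], n = #|V|
   (injective maps between sets of equal size are bijections). *)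
Definition linear_extensions (A : {set V * V}) : {set {ffun V -> 'I_#|V|}} :=
  [set f : {ffun V -> 'I_#|V|} | injectiveb f &&
     [forall u, forall v, induced_lt A u v ==> (f u < f v)]].

Definition num_linext (A : {set V * V}) : nat := #|linear_extensions A|.

Definition eps (E : rel V) : nat :=
  \max_(A in acyclic_orientations E) num_linext A.

Definition num_acyclic_orientations (E : rel V) : nat :=
  #|acyclic_orientations E|.

(* Complete p-partite: V partitioned into p nonempty parts (given by a
   surjective colouring c : V -> 'I_p), adjacency iff different parts. *)
Definition complete_multipartite (E : rel V) (p : nat) : Prop :=
  exists c : V -> 'I_p,
    (forall i : 'I_p, exists v, c v = i) /\
    (forall u v, E u v = (c u != c v)).

End Graphs.

From mathcomp Require Import all_boot.
Set Implicit Arguments. Unset Strict Implicit. Unset Printing Implicit Defensive.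

(* A linear extension f of an acyclic orientation A of G also orients every
   edge of the complement from its smaller to its larger f-value, and f is
   recovered from A together with this acyclic orientation of the complement:
   hence eps G is at most the number of acyclic orientations of the complement.
   If G is complete multipartite, order the parts linearly and orient G along
   that order; the complement is a disjoint union of cliques, one per part, and
   any acyclic orientation of it is a union of linear orders of the parts, which
   concatenate to a linear extension, so the bound is attained.  Otherwise
   there are non-edges av, vb with ab an edge, say oriented a -> b; the acyclic
   orientation of the complement with b -> v -> a then comes from no linear
   extension, whatever the orientation of G, and the bound is strict. *)

Lemma connect_homo_leq (T : finType) (r : rel T) (h : T -> nat) :
  (forall x y, r x y -> h x < h y) -> forall x y, connect r x y -> h x <= h y.
Proof.
move=> hr x y /connectP [p pth ->]; elim: p x pth => //= z p IH x /andP [rxz pth].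
exact: leq_trans (ltnW (hr _ _ rxz)) (IH _ pth).
Qed.

Lemma card_ltn_ord n k : k <= n -> #|[set i : 'I_n | i < k]| = k.
Proof.
move=> kn.
have -> : [set i : 'I_n | i < k] = widen_ord kn @: [set: 'I_k].
  apply/setP => i; rewrite inE; apply/idP/imsetP.
  - by move=> ik; exists (Ordinal ik) => //; apply: val_inj.
  - by case=> j _ ->; rewrite /= ltn_ord.
by rewrite card_imset ?cardsT ?card_ord // => a b /(congr1 val) /= /val_inj.
Qed.

Lemma inj_ord_rank (V : finType) (f : {ffun V -> 'I_#|V|}) : injective f ->
  forall u, f u = #|[set v | f v < f u]| :> nat.
Proof.
move=> finj u.
have fsurj i : exists v, f v = i.
  have /codomP [v ->] : i \in codom f by apply: inj_card_onto; rewrite ?card_ord.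
  by exists v.
rewrite -(card_imset _ finj).
have -> : f @: [set v | f v < f u] = [set i : 'I_#|V| | i < f u].
  apply/setP => i; rewrite inE; apply/imsetP/idP.
  - by case=> v; rewrite inE => ? ->.
  - by move=> ltiu; have [v fv] := fsurj i; exists v; rewrite ?inE fv.
by rewrite card_ltn_ord // ltnW.
Qed.

Lemma inj_ord_eq_of_ltn (V : finType) (f g : {ffun V -> 'I_#|V|}) :
  injective f -> injective g -> (forall x y, (f x < f y) = (g x < g y)) -> f = g.
Proof.
move=> finj ginj fg; apply/ffunP => x; apply: val_inj.
rewrite /= (inj_ord_rank finj) (inj_ord_rank ginj).
by apply: eq_card => y; rewrite !inE fg.
Qed.

(* The rank of x is the number of R-predecessors of x. *)
Lemma total_order_rank (V : finType) (R : rel V) :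
  irreflexive R -> transitive R -> (forall x y, x != y -> R x y || R y x) ->
  exists2 f : {ffun V -> 'I_#|V|}, injective f & forall x y, (f x < f y) = R x y.
Proof.
move=> Rirr Rtr Rtot.
pose rk x := #|[set y | R y x]|.
have rk_lt x y : R x y -> rk x < rk y.
  move=> Rxy; apply: proper_card; apply/properP; split.
  - by apply/subsetP => z; rewrite !inE => Rzx; apply: Rtr Rzx Rxy.
  - by exists x; rewrite !inE ?Rxy ?Rirr.
have rk_bound x : rk x < #|V|.
  rewrite -cardsT; apply: proper_card; apply/properP; split; first exact: subsetT.
  by exists x; rewrite !inE ?Rirr.
pose f : {ffun V -> 'I_#|V|} := [ffun x => Ordinal (rk_bound x)].
have fR x y : (f x < f y) = R x y.
  rewrite !ffunE /=; apply/idP/idP; last exact: rk_lt.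
  case: (eqVneq x y) => [-> | nxy]; first by rewrite ltnn.
  move=> rk_xy; case/orP: (Rtot _ _ nxy) => // /rk_lt rk_yx.
  by have := ltn_trans rk_xy rk_yx; rewrite ltnn.
exists f => // x y fxy; apply/eqP; apply: contraT => nxy.
by case/orP: (Rtot _ _ nxy); rewrite -fR fxy ltnn.
Qed.

Section Orientations.
Variable V : finType.
Implicit Types (E : rel V) (A : {set V * V}) (f : {ffun V -> 'I_#|V|}).

Lemma orientation_arc E A a b : is_orientation E A -> (a, b) \in A -> E a b.
Proof. by case/andP => /forallP arcE _; apply: (implyP (forallP (arcE a) b)). Qed.

Lemma orientation_edge E A a b : is_orientation E A -> E a b ->
  ((a, b) \in A) (+) ((b, a) \in A).
Proof. by case/andP => _ /forallP edgeA; apply: (implyP (forallP (edgeA a) b)). Qed.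

Lemma acyclic_arc A a b : acyclic A -> (a, b) \in A -> ~~ connect (arcs A) b a.
Proof. by move=> /forallP acA; apply: (implyP (forallP (acA a) b)). Qed.

Lemma acyclic_orientation_trans E A x y z : is_orientation E A -> acyclic A ->
  (x, y) \in A -> (y, z) \in A -> E x z -> (x, z) \in A.
Proof.
move=> Aor Aac xy yz Exz; have := orientation_edge Aor Exz.
case: ((x, z) \in A) => //= zx.
have zy : connect (arcs A) z y by apply: connect_trans (connect1 zx) (connect1 xy).
by have := acyclic_arc Aac yz; rewrite zy.
Qed.

Definition orient_by E (g : V -> nat) : {set V * V} :=
  [set x | E x.1 x.2 && (g x.1 < g x.2)].

Lemma arcs_orient_by E g x y : arcs (orient_by E g) x y -> g x < g y.
Proof. by rewrite /arcs inE => /andP []. Qed.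

Lemma induced_lt_orient_by E g x y : induced_lt (orient_by E g) x y -> g x < g y.
Proof.
case/existsP => w /andP [/arcs_orient_by gxw wy].
exact: leq_trans gxw (connect_homo_leq (@arcs_orient_by E g) wy).
Qed.

Lemma orient_by_acyclic E g : symmetric E -> (forall u v, E u v -> g u != g v) ->
  orient_by E g \in acyclic_orientations E.
Proof.
move=> Esym gE; rewrite inE; apply/andP; split; [apply/andP; split |].
- by apply/'forall_'forall_implyP => u v; rewrite inE => /andP [].
- apply/'forall_'forall_implyP => u v Euv; rewrite !inE /= Euv -Esym Euv /=.
  by have := gE _ _ Euv; rewrite neq_ltn => /orP [] lt; rewrite lt ltnNge ltnW.
- apply/'forall_'forall_implyP => u v; rewrite inE => /andP [_ guv].
  by apply/negP => /(connect_homo_leq (@arcs_orient_by E g)); rewrite leqNgt guv.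
Qed.

Lemma acyclic_orientations_neq0 E : simple_graph E -> 0 < #|acyclic_orientations E|.
Proof.
case=> Esym Eirr; apply/card_gt0P; exists (orient_by E (fun x => enum_rank x)).
apply: orient_by_acyclic => // u v; apply: contraTneq => /val_inj/enum_rank_inj ->.
by rewrite Eirr.
Qed.

Lemma linext_arc A f a b : f \in linear_extensions A -> (a, b) \in A -> f a < f b.
Proof.
rewrite inE => /andP [_ /'forall_'forall_implyP fA] ab; apply: fA.
by apply/existsP; exists b; rewrite /arcs ab connect0.
Qed.

Lemma linext_inj A f : f \in linear_extensions A -> injective f.
Proof. by rewrite inE => /andP [/injectiveP]. Qed.

Lemma compl_graph_sym E : symmetric E -> symmetric (compl_graph E).
Proof. by move=> Esym u v; rewrite /compl_graph eq_sym Esym. Qed.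

Variable E : rel V.
Hypothesis Esym : symmetric E.

Definition linext_orient f : {set V * V} := orient_by (compl_graph E) (fun x => f x).

Lemma linext_orient_acyclic A f : f \in linear_extensions A ->
  linext_orient f \in acyclic_orientations (compl_graph E).
Proof.
move/linext_inj => finj; apply: orient_by_acyclic; first exact: compl_graph_sym.
by move=> u v /andP [nuv _]; apply: contra nuv => /eqP /val_inj /finj ->.
Qed.

Lemma linext_ltnE A f x y : is_orientation E A -> f \in linear_extensions A ->
  x != y -> (f x < f y) = if E x y then (x, y) \in A else (x, y) \in linext_orient f.
Proof.
move=> Aor fA nxy; case: ifP => Exy; last by rewrite inE /compl_graph /= nxy Exy.
have := orientation_edge Aor Exy; case xy: ((x, y) \in A) => /= yx.
  exact: linext_arc fA xy.
by apply/negbTE; rewrite -leqNgt ltnW // (linext_arc fA yx).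
Qed.

Lemma linext_orient_inj A : is_orientation E A ->
  {in linear_extensions A &, injective linext_orient}.
Proof.
move=> Aor f g fA gA fg; apply: inj_ord_eq_of_ltn (linext_inj fA) (linext_inj gA) _.
move=> x y; case: (eqVneq x y) => [-> | nxy]; first by rewrite !ltnn.
by rewrite (linext_ltnE Aor fA nxy) (linext_ltnE Aor gA nxy) fg.
Qed.

Lemma linext_orient_sub A :
  linext_orient @: linear_extensions A \subset acyclic_orientations (compl_graph E).
Proof. by apply/subsetP => O /imsetP [f fA ->]; apply: linext_orient_acyclic fA. Qed.

Lemma card_linext_orient A : is_orientation E A ->
  #|linext_orient @: linear_extensions A| = num_linext A.
Proof. by move/linext_orient_inj/card_in_imset. Qed.

Lemma num_linext_le A : is_orientation E A ->
  num_linext A <= num_acyclic_orientations (compl_graph E).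
Proof. by move/card_linext_orient <-; apply/subset_leq_card/linext_orient_sub. Qed.

Lemma num_linext_lt A a v b : irreflexive E -> is_orientation E A ->
  (a, b) \in A -> ~~ E a v -> ~~ E v b ->
  num_linext A < num_acyclic_orientations (compl_graph E).
Proof.
move=> Eirr Aor ab nav nvb; have Eab := orientation_arc Aor ab.
have nab : a != b by apply: contraTneq Eab => ->; rewrite Eirr.
have nav' : a != v by apply: contraNneq nvb => <-.
have nvb' : v != b by apply: contraNneq nav => ->.
pose g x := if x == b then 0 else if x == v then 1 else if x == a then 2
            else (enum_rank x).+3.
have ginj : injective g.
  move=> x y; rewrite /g; repeat (case: ifP => [/eqP -> | _]) => //.
  by case=> /val_inj /enum_rank_inj.
pose O := orient_by (compl_graph E) g.
have O_ao : O \in acyclic_orientations (compl_graph E).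
  apply: orient_by_acyclic; first exact: compl_graph_sym.
  by move=> u w /andP [nuw _]; apply: contra nuw => /eqP /ginj ->.
have O_new : O \notin linext_orient @: linear_extensions A.
  apply/imsetP => [[f fA Of]].
  have fab := linext_arc fA ab.
  have /arcs_orient_by fbv : arcs (linext_orient f) b v.
    rewrite -Of /arcs inE /compl_graph /= eq_sym nvb' -Esym nvb /g.
    by rewrite eqxx (negbTE nvb') eqxx.
  have /arcs_orient_by fva : arcs (linext_orient f) v a.
    rewrite -Of /arcs inE /compl_graph /= eq_sym nav' -Esym nav /g (negbTE nvb') eqxx.
    by rewrite (negbTE nab) (negbTE nav') eqxx.
  by have := ltn_trans fbv (ltn_trans fva fab); rewrite ltnn.
rewrite -(card_linext_orient Aor); apply: proper_card; apply/properP.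
by split; [apply: linext_orient_sub | exists O].
Qed.

Section Multipartite.
Variables (p : nat) (c : V -> 'I_p).
Hypothesis Ec : forall u v, E u v = (c u != c v).

Definition part_orientation : {set V * V} := orient_by E (fun x => c x).

Lemma part_orientation_acyclic : part_orientation \in acyclic_orientations E.
Proof. by apply: orient_by_acyclic => // u v; rewrite Ec. Qed.

Lemma compl_multipartiteE u v : compl_graph E u v = (u != v) && (c u == c v).
Proof. by rewrite /compl_graph Ec negbK. Qed.

(* The linear extension lists the parts by increasing colour, each part in
   the order given by O, which is a transitive tournament on it. *)
Lemma linext_orient_onto O : O \in acyclic_orientations (compl_graph E) ->
  O \in linext_orient @: linear_extensions part_orientation.
Proof.
rewrite inE => /andP [Oor Oac].
have Oarc x y : (x, y) \in O -> (x != y) && (c x == c y).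
  by rewrite -compl_multipartiteE; apply: orientation_arc Oor.
pose R := [rel x y | (c x < c y) || ((c x == c y) && ((x, y) \in O))].
have Rirr : irreflexive R.
  by move=> x; rewrite /= ltnn eqxx; apply/negP => /Oarc; rewrite eqxx.
have Rtot x y : x != y -> R x y || R y x.
  move=> nxy /=; case: (ltngtP (c x) (c y)) => [|| /val_inj cxy]; rewrite ?orbT //.
  have := orientation_edge Oor (a := x) (b := y).
  rewrite compl_multipartiteE nxy cxy eqxx => /(_ isT).
  by case: ((x, y) \in O); case: ((y, x) \in O).
have Rtr : transitive R.
  move=> y x z /= /orP [cxy | /andP [/eqP cxy xy]] /orP [cyz | /andP [/eqP cyz yz]].
  - by rewrite (ltn_trans cxy cyz).
  - by rewrite -cyz cxy.
  - by rewrite cxy cyz.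
  have nxz : x != z.
    by apply: contraTneq yz => <-; apply: contra (acyclic_arc Oac xy); apply: connect1.
  have Exz : compl_graph E x z by rewrite compl_multipartiteE nxz cxy cyz eqxx.
  by rewrite cxy cyz eqxx (acyclic_orientation_trans Oor Oac xy yz Exz) orbT.
have [f finj fR] := total_order_rank Rirr Rtr Rtot.
apply/imsetP; exists f.
  rewrite inE; apply/andP; split; first exact/injectiveP.
  by apply/'forall_'forall_implyP => x y /induced_lt_orient_by cxy; rewrite fR /= cxy.
apply/setP => [[x y]]; rewrite inE compl_multipartiteE /= fR /=.
case xy: ((x, y) \in O); first by case/andP: (Oarc _ _ xy) => -> ->; rewrite orbT.
rewrite andbF orbF; case: (eqVneq (c x) (c y)) => [-> |]; rewrite ?ltnn ?andbF //.
Qed.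

Lemma num_linext_part_orientation :
  num_linext part_orientation = num_acyclic_orientations (compl_graph E).
Proof.
apply/eqP; rewrite eqn_leq num_linext_le; last by case/setIdP: part_orientation_acyclic.
have /setIdP [Aor _] := part_orientation_acyclic.
rewrite -(card_linext_orient Aor); apply: subset_leq_card.
by apply/subsetP => O; apply: linext_orient_onto.
Qed.

End Multipartite.

Lemma eps_le : eps E <= num_acyclic_orientations (compl_graph E).
Proof. by apply/bigmax_leqP => A /setIdP [Aor _]; apply: num_linext_le. Qed.

Lemma eps_lt_nonadj_path u v w : irreflexive E ->
  ~~ E u v -> ~~ E v w -> E u w -> eps E < num_acyclic_orientations (compl_graph E).
Proof.
move=> Eirr nuv nvw Euw; have ao_neq0 := acyclic_orientations_neq0 (conj Esym Eirr).
have [A /setIdP [Aor _]] := eq_bigmax_cond (@num_linext V) ao_neq0.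
rewrite /eps => ->.
have := orientation_edge Aor Euw; case uw: ((u, w) \in A) => /= wu.
  exact: num_linext_lt uw nuv nvw.
by apply: (num_linext_lt (v := v) Eirr Aor wu); rewrite Esym.
Qed.

Lemma eps_multipartite p (c : V -> 'I_p) : (forall u v, E u v = (c u != c v)) ->
  eps E = num_acyclic_orientations (compl_graph E).
Proof.
move=> Ec; apply/eqP; rewrite eqn_leq eps_le -(num_linext_part_orientation Ec).
exact: leq_bigmax_cond (part_orientation_acyclic Ec).
Qed.

(* The parts are the classes of the equivalence relation "equal or non-adjacent". *)
Lemma multipartite_of_nonadj_trans : irreflexive E -> 0 < #|V| ->
  (forall x y z, ~~ E x y -> ~~ E y z -> ~~ E x z) ->
  exists p, 1 <= p <= #|V| /\ complete_multipartite E p.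
Proof.
move=> Eirr /card_gt0P [x0 _] tr.
pose cls x := [set y | ~~ E x y].
pose P := cls @: [set: V].
have Px0 : cls x0 \in P by apply: imset_f; rewrite inE.
have clsE u v : (cls u == cls v) = ~~ E u v.
  apply/eqP/idP => [cluv | nuv].
    have : u \in cls v by rewrite -cluv inE Eirr.
    by rewrite inE Esym.
  by apply/setP => y; rewrite !inE; apply/idP/idP; apply: tr; rewrite // Esym.
exists #|P|; split.
  by rewrite -cardsT leq_imset_card andbT; apply/card_gt0P; exists (cls x0).
exists (fun x => enum_rank_in Px0 (cls x)); split.
  move=> i; have /imsetP [x _ clx] := enum_valP i.
  by exists x; rewrite -clx enum_valK_in.
move=> u v; rewrite -[E u v]negbK -clsE; congr negb; apply/eqP/eqP => [-> // | ruv].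
by rewrite -(enum_rankK_in Px0 (imset_f cls (in_setT u))) ruv enum_rankK_in ?imset_f.
Qed.

End Orientations.

Theorem proposition4p7 (V : finType) (E : rel V) :
  simple_graph E -> 0 < #|V| ->
  eps E <= num_acyclic_orientations (compl_graph E) /\
  (eps E = num_acyclic_orientations (compl_graph E) <->
   exists p, 1 <= p <= #|V| /\ complete_multipartite E p).
Proof.
move=> [Esym Eirr] Vpos; split; first exact: eps_le.
split=> [eps_eq | [p [_ [c [_ Ec]]]]]; last exact: eps_multipartite Ec.
case: (boolP [exists x, exists y, exists z, [&& ~~ E x y, ~~ E y z & E x z]]).
  case/existsP=> u /existsP [v /existsP [w /and3P [nuv nvw Euw]]].
  by have := eps_lt_nonadj_path Esym Eirr nuv nvw Euw; rewrite eps_eq ltnn.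
move=> no_path; apply: multipartite_of_nonadj_trans => // x y z nxy nyz.
apply: contraNN no_path => Exz.
by apply/existsP; exists x; apply/existsP; exists y; apply/existsP; exists z; apply/and3P.
Qed.
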